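(* Let $1\le q_1<q_2<\cdots$ be a strictly increasing sequence of integers satisfying $q_{n+1}<2q_n$ for all $n\in\mathbb{N}$, and let $S_n=q_1+\dots+q_n$. Let $k_0\ge 0$ be an integer. Then $S_n-q_{n+1}\ge 2k_0$ for every integer $n\ge q_1+2k_0+1$. *)

From mathcomp Require Import all_boot.
(* Sequences are 1-indexed: q 1, q 2, ...; the value q 0 is irrelevant. *)
Definition partial_sum (q : nat -> nat) (n : nat) : nat := \sum_(1 <= i < n.+1) q i.

From mathcomp Require Import all_boot.
From mathcomp Require Import zify.

(* Since q (n + 2) <= 2 q (n + 1) - 1, the integer S n - q (n + 1) grows by at
   least one at each step; it starts at q 1 - q 2 >= 1 - q 1, so it is at least
   n - q 1. *)

Lemma partial_sum1 (q : nat -> nat) : partial_sum q 1 = q 1.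
Proof. by rewrite /partial_sum big_nat1. Qed.

Lemma partial_sumS (q : nat -> nat) (n : nat) :
  partial_sum q n.+1 = partial_sum q n + q n.+1.
Proof. by rewrite /partial_sum big_nat_recr. Qed.

Lemma next_term_le_partial_sum (q : nat -> nat)
  (hgrow : forall n, 1 <= n -> q n.+1 < 2 * q n) (n : nat) :
  1 <= n -> q n.+1 + n <= partial_sum q n + q 1.
Proof.
elim: n => [// | [_ _ | n IH _]].
  by rewrite partial_sum1; have := hgrow 1 isT; lia.
rewrite partial_sumS; have := IH isT; have := hgrow n.+2 isT; lia.
Qed.

Theorem lemma2p2 (q : nat -> nat) (k0 : nat)
  (hq1 : 1 <= q 1)
  (hinc : forall n, 1 <= n -> q n < q n.+1)
  (hgrow : forall n, 1 <= n -> q n.+1 < 2 * q n) :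
  forall n, q 1 + 2 * k0 + 1 <= n ->
    q n.+1 + 2 * k0 <= partial_sum q n.
Proof.
move=> n hn.
have /(next_term_le_partial_sum q hgrow) : 1 <= n by lia.
lia.
Qed.
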